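(* Let $f:\mathbb{R}^n\to\mathbb{R}$ be bounded above on bounded sets, $x\in\mathbb{R}^n$, $\epsilon>0$, and suppose $g_x$ is Lipschitz at $\epsilon$ (i.e. $\operatorname{lip}g_x(\epsilon)<\infty$). Then $\operatorname{calm}\bar f_\epsilon(x)\le\operatorname{lip}g_x(\epsilon)=\sup\{|y|:y\in\partial g_x(\epsilon)\}$.
   Context: $\bar f_\epsilon(x):=\sup\{f(x'):|x'-x|\le\epsilon\}$; $g_x(\epsilon):=\bar f_\epsilon(x)$ for $\epsilon\ge0$. $\operatorname{calm}F(\bar y):=\limsup_{y\to\bar y,\,y\ne\bar y}\frac{|F(y)-F(\bar y)|}{|y-\bar y|}$, $\operatorname{lip}F(\bar y):=\limsup_{y,y'\to\bar y,\,y\ne y'}\frac{|F(y)-F(y')|}{|y-y'|}$. $\partial$ denotes the general (limiting) subdifferential: $v\in\partial g(\bar y)$ if there are $y^\nu\to\bar y$, $v^\nu\to v$ with $g(y^\nu)\to g(\bar y)$ and $g(y)\ge g(y^\nu)+v^\nu(y-y^\nu)+o(|y-y^\nu|)$. *)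

From Stdlib Require Import Reals Lra Classical ClassicalEpsilon.
From Stdlib Require Vectors.Fin.
Open Scope R_scope.

Definition Rn (n : nat) : Type := Fin.t n -> R.

Fixpoint sumsq (n : nat) : Rn n -> R :=
  match n return Rn n -> R with
  | O => fun _ => 0
  | S m => fun v => (v Fin.F1) ^ 2 + sumsq m (fun i => v (Fin.FS i))
  end.

Definition norm {n : nat} (v : Rn n) : R := sqrt (sumsq n v).
Definition dist {n : nat} (u v : Rn n) : R := norm (fun i => u i - v i).

Inductive Rbar : Type := Finite (r : R) | p_infty | m_infty.

Definition Rbar_le (a b : Rbar) : Prop :=
  match a, b with
  | m_infty, _ => True
  | _, p_infty => True
  | Finite x, Finite y => x <= y
  | _, _ => False
  end.

Definition Rbar_lt (a b : Rbar) : Prop := Rbar_le a b /\ a <> b.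

Definition Rbar_is_lub (S : Rbar -> Prop) (s : Rbar) : Prop :=
  (forall z, S z -> Rbar_le z s) /\
  (forall b, (forall z, S z -> Rbar_le z b) -> Rbar_le s b).

Definition Rbar_is_glb (S : Rbar -> Prop) (s : Rbar) : Prop :=
  (forall z, S z -> Rbar_le s z) /\
  (forall b, (forall z, S z -> Rbar_le b z) -> Rbar_le b s).

(** Supremum / infimum in the extended reals (they always exist). *)
Definition Rbar_sup (S : Rbar -> Prop) : Rbar :=
  epsilon (inhabits p_infty) (Rbar_is_lub S).
Definition Rbar_inf (S : Rbar -> Prop) : Rbar :=
  epsilon (inhabits p_infty) (Rbar_is_glb S).

(** Real supremum (used where the set is nonempty and bounded above). *)
Definition Rsup (E : R -> Prop) : R := epsilon (inhabits 0) (is_lub E).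

Definition fbar {n : nat} (f : Rn n -> R) (eps : R) (x : Rn n) : R :=
  Rsup (fun r => exists x', dist x' x <= eps /\ r = f x').

(** g_x (eps) = \bar f_eps (x)  (relevant for eps >= 0) *)
Definition gx {n : nat} (f : Rn n -> R) (x : Rn n) : R -> R :=
  fun eps => fbar f eps x.

(** calm F (ybar) = limsup_{y -> ybar, y <> ybar} |F y - F ybar| / |y - ybar|
    = inf_{delta > 0} sup { ... : 0 < |y - ybar| < delta } *)
Definition calm {n : nat} (F : Rn n -> R) (ybar : Rn n) : Rbar :=
  Rbar_inf (fun z => exists delta, delta > 0 /\
    z = Rbar_sup (fun w => exists y, 0 < dist y ybar < delta /\
          w = Finite (Rabs (F y - F ybar) / dist y ybar))).

(** lip G (ybar) = limsup_{y, y' -> ybar, y <> y'} |G y - G y'| / |y - y'|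
    for G : R -> R. *)
Definition lip (G : R -> R) (ybar : R) : Rbar :=
  Rbar_inf (fun z => exists delta, delta > 0 /\
    z = Rbar_sup (fun w => exists y y', y <> y' /\
          Rabs (y - ybar) < delta /\ Rabs (y' - ybar) < delta /\
          w = Finite (Rabs (G y - G y') / Rabs (y - y')))).

Definition regular_subgrad (g : R -> R) (y0 v : R) : Prop :=
  forall eta, eta > 0 -> exists delta, delta > 0 /\
    forall y, Rabs (y - y0) < delta ->
      g y >= g y0 + v * (y - y0) - eta * Rabs (y - y0).

Definition limiting_subdiff (g : R -> R) (ybar v : R) : Prop :=
  exists (ys vs : nat -> R),
    Un_cv ys ybar /\ Un_cv vs v /\ Un_cv (fun k => g (ys k)) (g ybar) /\
    forall k, regular_subgrad g (ys k) (vs k).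

Definition bdd_above_on_bdd {n : nat} (f : Rn n -> R) : Prop :=
  forall S : Rn n -> Prop, (exists r, forall y, S y -> norm y <= r) ->
    exists M, forall y, S y -> f y <= M.

(* Proof structure.
   - Euclidean geometry of R^n (triangle inequality via planar Minkowski) and
     completeness of the extended reals, so that [fbar], [Rbar_sup] and
     [Rbar_inf] are genuine suprema/infima.
   - Moving the center of a ball by d is dominated by changing its radius by d:
     g_x(eps - d) <= fbar_eps(y) <= g_x(eps + d) for d = |y - x|.  Together with
     the local (L + eta)-Lipschitz bounds that [lip g_x(eps) = L] provides, this
     gives the calmness estimate.
   - For the equality: limiting subgradients of a function that is
     (L + eta)-Lipschitz near the point have modulus <= L; conversely, since
     g_x is nondecreasing, steep difference quotients near eps are turned into
     regular subgradients >= L - eta by a fuzzy mean value inequality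
     (minimize G t - lam t + K max(0, a - t)^2 on an interval), so L itself is
     a limiting subgradient. *)
From Stdlib Require Import Reals Lra Psatz Classical ClassicalEpsilon.
From Stdlib Require Rgeom.
Open Scope R_scope.

Lemma sumsq_nonneg n : forall v : Rn n, 0 <= sumsq n v.
Proof.
  induction n as [|n IH]; intros v; simpl; [lra|].
  pose proof (IH (fun i => v (Fin.FS i))). nra.
Qed.

Lemma sumsq_ext n : forall u v : Rn n, (forall i, u i = v i) -> sumsq n u = sumsq n v.
Proof.
  induction n as [|n IH]; intros u v H; simpl; [reflexivity|].
  rewrite H, (IH _ (fun i => v (Fin.FS i))); auto.
Qed.

Lemma sumsq_zero n : sumsq n (fun _ => 0) = 0.
Proof. induction n as [|n IH]; simpl; [reflexivity|]. rewrite IH; ring. Qed.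

Lemma sumsq_opp n : forall v : Rn n, sumsq n (fun i => - v i) = sumsq n v.
Proof.
  induction n as [|n IH]; intros v; simpl; [reflexivity|].
  rewrite (IH (fun i => v (Fin.FS i))); ring.
Qed.

Lemma norm_ext n (u v : Rn n) : (forall i, u i = v i) -> norm u = norm v.
Proof. intros H; unfold norm; rewrite (sumsq_ext n u v H); reflexivity. Qed.

(* Minkowski's inequality in the plane, read off the triangle inequality of
   [Rgeom] for the points (a+b, p+q), (b, q) and the origin. *)
Lemma planar_minkowski a b p q :
  sqrt ((a + b) ^ 2 + (p + q) ^ 2) <= sqrt (a ^ 2 + p ^ 2) + sqrt (b ^ 2 + q ^ 2).
Proof.
  pose proof (Rgeom.triangle (a + b) (p + q) 0 0 b q) as H; unfold Rgeom.dist_euc, Rsqr in H.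
  replace ((a + b - 0) * (a + b - 0) + (p + q - 0) * (p + q - 0))
    with ((a + b) ^ 2 + (p + q) ^ 2) in H by ring.
  replace ((a + b - b) * (a + b - b) + (p + q - q) * (p + q - q))
    with (a ^ 2 + p ^ 2) in H by ring.
  replace ((b - 0) * (b - 0) + (q - 0) * (q - 0)) with (b ^ 2 + q ^ 2) in H by ring.
  exact H.
Qed.

Lemma norm_add n : forall u v : Rn n, norm (fun i => u i + v i) <= norm u + norm v.
Proof.
  unfold norm; induction n as [|n IH]; intros u v; simpl.
  - rewrite sqrt_0; lra.
  - specialize (IH (fun i => u (Fin.FS i)) (fun i => v (Fin.FS i))); simpl in IH.
    set (U := sumsq n (fun i => u (Fin.FS i))) in *.
    set (V := sumsq n (fun i => v (Fin.FS i))) in *.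
    set (W := sumsq n (fun i => u (Fin.FS i) + v (Fin.FS i))) in *.
    assert (HU : 0 <= U) by apply sumsq_nonneg.
    assert (HV : 0 <= V) by apply sumsq_nonneg.
    assert (HW : W <= (sqrt U + sqrt V) ^ 2).
    { pose proof (sqrt_sqrt W (sumsq_nonneg n _)); pose proof (sqrt_pos W); nra. }
    replace U with (sqrt U ^ 2) by (simpl; rewrite Rmult_1_r; apply sqrt_sqrt, HU).
    replace V with (sqrt V ^ 2) by (simpl; rewrite Rmult_1_r; apply sqrt_sqrt, HV).
    eapply Rle_trans; [|apply planar_minkowski].
    apply sqrt_le_1_alt; lra.
Qed.

Lemma dist_refl n (u : Rn n) : dist u u = 0.
Proof.
  unfold dist, norm. rewrite (sumsq_ext n _ (fun _ => 0)) by (intros; ring).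
  rewrite sumsq_zero; apply sqrt_0.
Qed.

Lemma dist_nonneg n (u v : Rn n) : 0 <= dist u v.
Proof. apply sqrt_pos. Qed.

Lemma dist_sym n (u v : Rn n) : dist u v = dist v u.
Proof.
  unfold dist, norm.
  rewrite (sumsq_ext n (fun i => u i - v i) (fun i => - (v i - u i))) by (intros; ring).
  rewrite sumsq_opp; reflexivity.
Qed.

Lemma dist_tri n (u v w : Rn n) : dist u w <= dist u v + dist v w.
Proof.
  unfold dist.
  rewrite (norm_ext n (fun i => u i - w i) (fun i => (u i - v i) + (v i - w i)))
    by (intros; ring).
  apply norm_add.
Qed.

Lemma norm_le_dist n (y z : Rn n) : norm y <= dist y z + norm z.
Proof.
  unfold dist. rewrite (norm_ext n y (fun i => (y i - z i) + z i)) by (intros; ring).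
  apply (norm_add n (fun i => y i - z i) z).
Qed.

Lemma Rabs_le_bounds a b : Rabs a <= b -> - b <= a <= b.
Proof.
  intros H; pose proof (Rle_abs a); pose proof (Rle_abs (- a)); rewrite Rabs_Ropp in *; lra.
Qed.

Lemma Rbar_le_trans a b c : Rbar_le a b -> Rbar_le b c -> Rbar_le a c.
Proof. destruct a, b, c; simpl; auto; try lra; tauto. Qed.

Lemma Rbar_le_antisym a b : Rbar_le a b -> Rbar_le b a -> a = b.
Proof. destruct a, b; simpl; try tauto. intros; f_equal; lra. Qed.

Lemma Rle_of_approx a b : (forall e, e > 0 -> a <= b + e) -> a <= b.
Proof.
  intros H; destruct (Rle_dec a b) as [|Hlt]; auto.
  specialize (H ((a - b) / 2) ltac:(lra)); lra.
Qed.

Lemma Rbar_le_of_approx a L :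
  (forall e, e > 0 -> Rbar_le a (Finite (L + e))) -> Rbar_le a (Finite L).
Proof.
  intros H; destruct a as [r| |]; simpl; auto.
  - apply Rle_of_approx; exact H.
  - exact (H 1 ltac:(lra)).
Qed.

Lemma Rbar_lub_ex (S : Rbar -> Prop) : exists s, Rbar_is_lub S s.
Proof.
  destruct (classic (S p_infty)) as [Hp|Hp].
  { exists p_infty; split; [intros [] _; simpl; auto | intros b Hb; exact (Hb _ Hp)]. }
  set (E := fun r => S (Finite r)).
  destruct (classic (exists r, E r)) as [[r0 Hr0]|HE].
  2:{ exists m_infty; split; [|intros []; simpl; auto].
      intros [r| |] Hz; simpl; auto; apply HE; exists r; exact Hz. }
  destruct (classic (bound E)) as [Hb|Hb].
  - destruct (completeness E Hb (ex_intro _ r0 Hr0)) as [m [Hm1 Hm2]].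
    exists (Finite m); split.
    + intros [r| |] Hz; simpl; [exact (Hm1 r Hz) | contradiction | exact I].
    + intros [rb| |] Hb'; simpl; auto.
      * apply Hm2; intros r Hr; exact (Hb' _ Hr).
      * exact (Hb' _ Hr0).
  - exists p_infty; split; [intros [] _; simpl; auto|].
    intros [rb| |] Hb'; simpl; auto.
    + apply Hb; exists rb; intros r Hr; exact (Hb' _ Hr).
    + exact (Hb' _ Hr0).
Qed.

(* Greatest lower bounds exist too: the sup of the set of lower bounds. *)
Lemma Rbar_glb_ex (S : Rbar -> Prop) : exists s, Rbar_is_glb S s.
Proof.
  destruct (Rbar_lub_ex (fun b => forall z, S z -> Rbar_le b z)) as [s [H1 H2]].
  exists s; split.
  - intros z Hz; apply H2; intros b Hb; exact (Hb _ Hz).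
  - intros b Hb; exact (H1 _ Hb).
Qed.

Lemma Rbar_sup_spec S : Rbar_is_lub S (Rbar_sup S).
Proof. unfold Rbar_sup; apply epsilon_spec, Rbar_lub_ex. Qed.

Lemma Rbar_inf_spec S : Rbar_is_glb S (Rbar_inf S).
Proof. unfold Rbar_inf; apply epsilon_spec, Rbar_glb_ex. Qed.

Lemma Rbar_sup_ub S z : S z -> Rbar_le z (Rbar_sup S).
Proof. apply Rbar_sup_spec. Qed.

Lemma Rbar_sup_least S b : (forall z, S z -> Rbar_le z b) -> Rbar_le (Rbar_sup S) b.
Proof. apply Rbar_sup_spec. Qed.

Lemma Rbar_inf_lb S z : S z -> Rbar_le (Rbar_inf S) z.
Proof. apply Rbar_inf_spec. Qed.

Lemma Rbar_inf_greatest S b : (forall z, S z -> Rbar_le b z) -> Rbar_le b (Rbar_inf S).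
Proof. apply Rbar_inf_spec. Qed.

Lemma Rbar_sup_unique S a : Rbar_is_lub S a -> Rbar_sup S = a.
Proof.
  intros [Hub Hleast]; apply Rbar_le_antisym.
  - exact (Rbar_sup_least S a Hub).
  - apply Hleast, Rbar_sup_spec.
Qed.

(* [fbar f r z] is the least upper bound of [f] on the closed ball B(z, r):
   the ball is bounded, so [f] is bounded above on it, and it contains [z]. *)
Lemma fbar_is_lub n (f : Rn n -> R) r z : bdd_above_on_bdd f -> 0 <= r ->
  is_lub (fun v => exists x', dist x' z <= r /\ v = f x') (fbar f r z).
Proof.
  intros hf Hr. unfold fbar, Rsup; apply epsilon_spec.
  destruct (hf (fun y => dist y z <= r)) as [M HM].
  { exists (r + norm z); intros y Hy; pose proof (norm_le_dist n y z); lra. }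
  destruct (completeness (fun v => exists x', dist x' z <= r /\ v = f x')) as [m Hm].
  - exists M; intros v [x' [Hx' ->]]; exact (HM x' Hx').
  - exists (f z), z; rewrite dist_refl; split; auto.
  - exists m; exact Hm.
Qed.

Lemma fbar_le_of_incl n (f : Rn n -> R) z r z' r' :
  bdd_above_on_bdd f -> 0 <= r ->
  (forall y, dist y z <= r -> dist y z' <= r') -> fbar f r z <= fbar f r' z'.
Proof.
  intros hf Hr Hincl.
  assert (Hr' : 0 <= r').
  { pose proof (dist_nonneg n z z'); pose proof (Hincl z ltac:(rewrite dist_refl; lra)); lra. }
  destruct (fbar_is_lub n f r z hf Hr) as [_ Hleast].
  destruct (fbar_is_lub n f r' z' hf Hr') as [Hub _].
  apply Hleast; intros v [y [Hy ->]]; apply Hub; exists y; auto.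
Qed.

Lemma gx_mono n (f : Rn n -> R) x r1 r2 : bdd_above_on_bdd f -> 0 <= r1 -> r1 <= r2 ->
  gx f x r1 <= gx f x r2.
Proof. intros hf H1 H2; apply fbar_le_of_incl; auto; intros; lra. Qed.

Lemma fbar_shift_center n (f : Rn n -> R) eps x y :
  bdd_above_on_bdd f -> dist y x <= eps ->
  gx f x (eps - dist y x) <= fbar f eps y <= gx f x (eps + dist y x).
Proof.
  intros hf Hd; pose proof (dist_nonneg n y x); unfold gx; split;
    apply fbar_le_of_incl; auto; try lra; intros w Hw.
  - pose proof (dist_tri n w x y); rewrite (dist_sym n x y) in *; lra.
  - pose proof (dist_tri n w y x); lra.
Qed.

Definition slope_sup (G : R -> R) (yb delta : R) : Rbar :=
  Rbar_sup (fun w => exists y y', y <> y' /\ Rabs (y - yb) < delta /\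
    Rabs (y' - yb) < delta /\ w = Finite (Rabs (G y - G y') / Rabs (y - y'))).

Lemma lip_as_inf G yb :
  lip G yb = Rbar_inf (fun z => exists delta, delta > 0 /\ z = slope_sup G yb delta).
Proof. reflexivity. Qed.

Definition locally_lipschitz_with (G : R -> R) (yb K : R) : Prop :=
  exists delta, delta > 0 /\ forall y y', Rabs (y - yb) < delta ->
    Rabs (y' - yb) < delta -> Rabs (G y - G y') <= K * Rabs (y - y').

(* Difference quotients are nonnegative, hence so is [lip]. *)
Lemma lip_nonneg G yb : Rbar_le (Finite 0) (lip G yb).
Proof.
  rewrite lip_as_inf; apply Rbar_inf_greatest; intros z [d [Hd ->]].
  eapply Rbar_le_trans;
    [|apply Rbar_sup_ub; exists yb, (yb + d / 2); split; [lra|split; [|split; [|reflexivity]]]].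
  - simpl; apply Rmult_le_pos; [apply Rabs_pos|].
    left; apply Rinv_0_lt_compat, Rabs_pos_lt; lra.
  - replace (yb - yb) with 0 by ring; rewrite Rabs_R0; lra.
  - replace (yb + d / 2 - yb) with (d / 2) by ring; rewrite Rabs_pos_eq; lra.
Qed.

Lemma lip_finite G yb : Rbar_lt (lip G yb) p_infty -> exists L, lip G yb = Finite L.
Proof.
  intros [_ Hne]; pose proof (lip_nonneg G yb) as H0.
  destruct (lip G yb) as [L| |]; simpl in *; [exists L; auto | congruence | contradiction].
Qed.

(* If [lip G yb = L] then, for every [eta > 0], [G] is [(L + eta)]-Lipschitz
   near [yb]: otherwise every window would contain a quotient above [L + eta]. *)
Lemma lip_upper G yb L : lip G yb = Finite L ->
  forall eta, eta > 0 -> locally_lipschitz_with G yb (L + eta).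
Proof.
  intros HL eta Heta; apply NNPP; intros Hnot.
  assert (Hge : Rbar_le (Finite (L + eta)) (lip G yb)).
  { rewrite lip_as_inf; apply Rbar_inf_greatest; intros z [d [Hd ->]].
    apply NNPP; intros Hsmall; apply Hnot; exists d; split; auto.
    intros y y' Hy Hy'; apply Rnot_lt_le; intros Hbig; apply Hsmall.
    assert (Hne : y <> y').
    { intros <-; rewrite !Rminus_diag, Rabs_R0 in Hbig; lra. }
    eapply Rbar_le_trans; [|apply Rbar_sup_ub; exists y, y'; repeat split; eauto].
    simpl; left; apply Rmult_gt_reg_r with (Rabs (y - y')).
    - apply Rabs_pos_lt; lra.
    - unfold Rdiv; rewrite Rmult_assoc, Rinv_l; [lra|].
      apply Rgt_not_eq, Rabs_pos_lt; lra. }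
  rewrite HL in Hge; simpl in Hge; lra.
Qed.

Lemma lip_lower G yb L : lip G yb = Finite L -> forall eta delta, eta > 0 -> delta > 0 ->
  exists y y', y <> y' /\ Rabs (y - yb) < delta /\ Rabs (y' - yb) < delta /\
    Rabs (G y - G y') / Rabs (y - y') > L - eta.
Proof.
  intros HL eta d Heta Hd; apply NNPP; intros Hnone.
  assert (Hle : Rbar_le (slope_sup G yb d) (Finite (L - eta))).
  { apply Rbar_sup_least; intros w [y [y' [Hne [Hy [Hy' ->]]]]]; simpl.
    apply Rnot_lt_le; intros Hgt; apply Hnone; exists y, y'; auto. }
  assert (Hlip : Rbar_le (lip G yb) (slope_sup G yb d)).
  { rewrite lip_as_inf; apply Rbar_inf_lb; exists d; auto. }
  pose proof (Rbar_le_trans _ _ _ Hlip Hle) as H; rewrite HL in H; simpl in H; lra.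
Qed.

Lemma calm_le n (F : Rn n -> R) x L :
  (forall eta, eta > 0 -> exists delta, delta > 0 /\ forall y, 0 < dist y x < delta ->
     Rabs (F y - F x) <= (L + eta) * dist y x) -> Rbar_le (calm F x) (Finite L).
Proof.
  intros H; apply Rbar_le_of_approx; intros eta Heta.
  destruct (H eta Heta) as [d [Hd Hy]].
  eapply Rbar_le_trans; [apply Rbar_inf_lb; exists d; split; [exact Hd | reflexivity]|].
  apply Rbar_sup_least; intros w [y [Hyd ->]]; simpl.
  apply Rmult_le_reg_r with (dist y x); [lra|].
  unfold Rdiv; rewrite Rmult_assoc, Rinv_l by lra; rewrite Rmult_1_r; auto.
Qed.

(* First half of the corollary, for general [L]: a local Lipschitz bound on
   [g_x] at [eps] bounds the calmness of [fbar_eps] at [x], because moving the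
   center by [d] is dominated by changing the radius by [d]. *)
Lemma calm_fbar_le n (f : Rn n -> R) x eps L : bdd_above_on_bdd f -> eps > 0 ->
  (forall eta, eta > 0 -> locally_lipschitz_with (gx f x) eps (L + eta)) ->
  Rbar_le (calm (fbar f eps) x) (Finite L).
Proof.
  intros hf Heps Hlip; apply calm_le; intros eta Heta.
  destruct (Hlip eta Heta) as [d [Hd Hg]].
  exists (Rmin d eps); split; [apply Rmin_glb_lt; lra|].
  intros y [Hy0 Hy]; pose proof (Rmin_l d eps); pose proof (Rmin_r d eps).
  destruct (fbar_shift_center n f eps x y hf ltac:(lra)) as [Hlo Hhi].
  set (r := dist y x) in *.
  assert (Hr : forall s, Rabs s = r -> Rabs (gx f x (eps + s) - gx f x eps) <= (L + eta) * r).
  { intros s Hs; rewrite <- Hs; replace s with (eps + s - eps) at 2 by ring.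
    apply Hg; [replace (eps + s - eps) with s by ring | rewrite Rminus_diag, Rabs_R0]; lra. }
  pose proof (Hr r (Rabs_pos_eq r ltac:(lra))) as Hplus.
  pose proof (Hr (- r) ltac:(rewrite Rabs_Ropp; apply Rabs_pos_eq; lra)) as Hminus.
  replace (eps + - r) with (eps - r) in Hminus by ring.
  unfold gx in *; apply Rabs_le; apply Rabs_le_bounds in Hplus; apply Rabs_le_bounds in Hminus.
  lra.
Qed.

(* A regular subgradient at [z] of a function that is calm with constant [M]
   at [z] has modulus at most [M]: test the subgradient inequality at z +- u. *)
Lemma regular_subgrad_bound G z v r M : regular_subgrad G z v -> r > 0 ->
  (forall y, Rabs (y - z) < r -> Rabs (G y - G z) <= M * Rabs (y - z)) -> Rabs v <= M.
Proof.
  intros Hs Hr HM; apply Rle_of_approx; intros e He.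
  destruct (Hs e He) as [d [Hd Hsub]].
  set (u := Rmin d r / 2).
  assert (Hu : 0 < u /\ u < d /\ u < r).
  { unfold u; pose proof (Rmin_l d r); pose proof (Rmin_r d r);
    pose proof (Rmin_glb_lt d r 0 Hd Hr); lra. }
  assert (Eplus : Rabs (z + u - z) = u)
    by (replace (z + u - z) with u by ring; apply Rabs_pos_eq; lra).
  assert (Eminus : Rabs (z - u - z) = u)
    by (replace (z - u - z) with (- u) by ring; rewrite Rabs_Ropp; apply Rabs_pos_eq; lra).
  pose proof (Hsub (z + u) ltac:(lra)) as Splus; pose proof (Hsub (z - u) ltac:(lra)) as Sminus.
  pose proof (HM (z + u) ltac:(lra)) as Mplus; pose proof (HM (z - u) ltac:(lra)) as Mminus.
  rewrite Eplus in Splus, Mplus; rewrite Eminus in Sminus, Mminus.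
  apply Rabs_le_bounds in Mplus; apply Rabs_le_bounds in Mminus.
  assert (Hv : v * u <= (M + e) * u /\ - v * u <= (M + e) * u) by lra.
  destruct Hv as [Hv1 Hv2]; apply Rmult_le_reg_r in Hv1; apply Rmult_le_reg_r in Hv2; try lra.
  apply Rabs_le; lra.
Qed.

(* A local quadratic minorant G y >= G z + v (y - z) - K (y - z)^2 makes [v] a
   regular subgradient of [G] at [z]: the quadratic term is o(|y - z|). *)
Lemma quadratic_minorant_subgrad G z v r K : r > 0 -> 0 <= K ->
  (forall y, Rabs (y - z) < r -> G y >= G z + v * (y - z) - K * (y - z) ^ 2) ->
  regular_subgrad G z v.
Proof.
  intros Hr HK Hmin eta Heta.
  exists (Rmin r (eta / (K + 1))); split.
  { apply Rmin_glb_lt; [lra | apply Rdiv_lt_0_compat; lra]. }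
  intros y Hy; pose proof (Rmin_l r (eta / (K + 1))); pose proof (Rmin_r r (eta / (K + 1))).
  specialize (Hmin y ltac:(lra)).
  assert (Hsmall : (K + 1) * Rabs (y - z) <= eta).
  { apply Rmult_le_reg_r with (/ (K + 1)); [apply Rinv_0_lt_compat; lra|].
    rewrite Rmult_comm, <- Rmult_assoc, Rinv_l, Rmult_1_l by lra; unfold Rdiv in *; lra. }
  rewrite <- (pow2_abs (y - z)) in Hmin; pose proof (Rabs_pos (y - z)); nra.
Qed.

Definition left_gap (a t : R) : R := Rmax 0 (a - t).

Lemma left_gap_nonneg a t : 0 <= left_gap a t.
Proof. apply Rmax_l. Qed.

Lemma left_gap_lipschitz a y t : Rabs (left_gap a y - left_gap a t) <= Rabs (y - t).
Proof.
  unfold left_gap, Rmax; apply Rabs_le; pose proof (Rle_abs (y - t));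
    pose proof (Rle_abs (- (y - t))); rewrite Rabs_Ropp in *;
    destruct (Rle_dec 0 (a - y)), (Rle_dec 0 (a - t)); lra.
Qed.

Lemma left_gap_sq a y z : left_gap a y ^ 2 <= (left_gap a z - (y - z)) ^ 2.
Proof.
  unfold left_gap; destruct (Rle_or_lt (a - y) 0) as [Hy|Hy].
  - rewrite Rmax_left by lra; replace (0 ^ 2) with 0 by ring; apply pow2_ge_0.
  - rewrite (Rmax_right 0 (a - y)) by lra; pose proof (Rmax_r 0 (a - z)); nra.
Qed.

Lemma calm_continuity_pt h t r C : r > 0 ->
  (forall y, Rabs (y - t) < r -> Rabs (h y - h t) <= C * Rabs (y - t)) -> continuity_pt h t.
Proof.
  intros Hr H e He.
  assert (HC : 0 < Rabs C + 1) by (pose proof (Rabs_pos C); lra).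
  exists (Rmin r (e / (Rabs C + 1))); split.
  { apply Rmin_glb_lt; [lra | apply Rdiv_lt_0_compat; lra]. }
  intros y [_ Hy]; simpl in *; unfold R_dist in *.
  pose proof (Rmin_l r (e / (Rabs C + 1))); pose proof (Rmin_r r (e / (Rabs C + 1))).
  specialize (H y ltac:(lra)).
  assert (Rabs (y - t) * (Rabs C + 1) < e).
  { apply Rlt_le_trans with (e / (Rabs C + 1) * (Rabs C + 1)); [apply Rmult_lt_compat_r; lra|].
    unfold Rdiv; rewrite Rmult_assoc, Rinv_l; lra. }
  pose proof (Rabs_pos (y - t)); pose proof (Rle_abs C); nra.
Qed.

Lemma penalized_min_subgrad G a lam K z r : r > 0 -> 0 <= K ->
  (forall y, Rabs (y - z) < r ->
     G z - lam * z + K * left_gap a z ^ 2 <= G y - lam * y + K * left_gap a y ^ 2) ->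
  regular_subgrad G z (lam + 2 * K * left_gap a z).
Proof.
  intros Hr HK Hmin; apply (quadratic_minorant_subgrad G z _ r K Hr HK).
  intros y Hy; specialize (Hmin y Hy).
  pose proof (Rmult_le_compat_l K _ _ HK (left_gap_sq a y z)); nra.
Qed.

Section FuzzyMeanValue.

Variables (G : R -> R) (lo hi a b c M eta : R).
Hypotheses (Hlo : lo < a - c) (Hc : c > 0) (Hab : a < b) (Hhi : b < hi) (Heta : eta > 0).
Hypothesis HM : forall y y', lo < y < hi -> lo < y' < hi -> Rabs (G y - G y') <= M * Rabs (y - y').

(* [Phi] tilts [G] by a slope [lam] slightly below that of the chord over
   [a, b], and penalizes the part of [a - c, b] left of [a] by [K]. *)
Let lam := (G b - G a) / (b - a) - eta.
Let K := (Rabs M + Rabs lam + 1) / c.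
Let Phi (t : R) : R := G t - lam * t + K * left_gap a t ^ 2.

Lemma K_pos : K > 0.
Proof.
  unfold K; apply Rdiv_lt_0_compat; [pose proof (Rabs_pos M); pose proof (Rabs_pos lam)|]; lra.
Qed.

Lemma Phi_continuous t : lo < t < hi -> continuity_pt Phi t.
Proof.
  intros Ht; unfold Phi.
  assert (cG : continuity_pt G t).
  { apply (calm_continuity_pt G t (Rmin (t - lo) (hi - t)) M); [apply Rmin_glb_lt; lra|].
    intros y Hy; pose proof (Rmin_l (t - lo) (hi - t)); pose proof (Rmin_r (t - lo) (hi - t)).
    apply Rabs_def2 in Hy; apply HM; lra. }
  assert (cp : continuity_pt (left_gap a) t).
  { apply (calm_continuity_pt _ t 1 1); [lra|].
    intros y _; rewrite Rmult_1_l; apply left_gap_lipschitz. }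
  assert (csq : continuity_pt (fun y => left_gap a y ^ 2) t).
  { apply (continuity_pt_comp (left_gap a) (fun s => s ^ 2)); [exact cp|].
    apply derivable_continuous_pt, derivable_pt_pow. }
  apply (continuity_pt_plus (fun y => G y - lam * y) (fun y => K * left_gap a y ^ 2)).
  - apply (continuity_pt_minus G (fun y => lam * y)); [exact cG|].
    apply (continuity_pt_scal id), derivable_continuous_pt, derivable_pt_id.
  - apply (continuity_pt_scal (fun y => left_gap a y ^ 2)), csq.
Qed.

(* Phi is strictly larger at both endpoints than at [a]: at [b] because the
   slope exceeds [lam], at [a - c] because the penalty K c^2 dominates. *)
Lemma Phi_endpoints : Phi a < Phi b /\ Phi a < Phi (a - c).
Proof.
  assert (Ea : left_gap a a = 0) by (unfold left_gap; rewrite Rminus_diag, Rmax_left; lra).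
  assert (Eb : left_gap a b = 0) by (unfold left_gap; rewrite Rmax_left; lra).
  assert (Ec : left_gap a (a - c) = c)
    by (unfold left_gap; replace (a - (a - c)) with c by ring; rewrite Rmax_right; lra).
  unfold Phi; rewrite Ea, Eb, Ec; split.
  - assert (Hslope : G b - G a = (G b - G a) / (b - a) * (b - a)) by (field; lra).
    unfold lam; nra.
  - pose proof (HM (a - c) a ltac:(lra) ltac:(lra)) as Hlip.
    replace (a - c - a) with (- c) in Hlip by ring.
    rewrite Rabs_Ropp, (Rabs_pos_eq c) in Hlip by lra; apply Rabs_le_bounds in Hlip.
    assert (HKc : K * c ^ 2 = (Rabs M + Rabs lam + 1) * c) by (unfold K; field; lra).
    pose proof (Rle_abs M); pose proof (Rle_abs (- lam)); rewrite Rabs_Ropp in *; nra.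
Qed.

(* It is the
   subgradient at an interior minimizer of [Phi] on [a - c, b]. *)
Lemma fuzzy_mean_value :
  exists z v, a - c < z < b /\ regular_subgrad G z v /\ v >= (G b - G a) / (b - a) - eta.
Proof.
  destruct (continuity_ab_min Phi (a - c) b ltac:(lra)) as [z [Hzmin Hz]].
  { intros t Ht; apply Phi_continuous; lra. }
  destruct Phi_endpoints as [Hb Hc'].
  pose proof (Hzmin a ltac:(lra)) as Hza.
  assert (Hzi : a - c < z < b).
  { split; destruct Hz as [Hz1 Hz2]; [destruct Hz1 | destruct Hz2]; auto; subst; lra. }
  exists z, (lam + 2 * K * left_gap a z); split; [exact Hzi | split].
  - apply (penalized_min_subgrad G a lam K z (Rmin (z - (a - c)) (b - z)));
      [apply Rmin_glb_lt; lra | left; apply K_pos |].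
    intros y Hy; pose proof (Rmin_l (z - (a - c)) (b - z));
    pose proof (Rmin_r (z - (a - c)) (b - z)).
    apply Rabs_def2 in Hy; apply (Hzmin y); lra.
  - pose proof K_pos; pose proof (left_gap_nonneg a z).
    assert (0 <= K * left_gap a z) by (apply Rmult_le_pos; lra); unfold lam in *; lra.
Qed.

End FuzzyMeanValue.

Lemma Un_cv_of_inv_bound (u : nat -> R) l :
  (forall k, Rabs (u k - l) < / (INR k + 1)) -> Un_cv u l.
Proof.
  intros H e He; destruct (archimed_cor1 e He) as [N [HN HN0]].
  exists N; intros k Hk; unfold R_dist.
  assert (HNpos : 0 < INR N) by (apply lt_0_INR; exact HN0).
  assert (HNk : INR N <= INR k + 1) by (apply le_INR in Hk; lra).
  pose proof (Rinv_le_contravar _ _ HNpos HNk); pose proof (H k); lra.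
Qed.

(* [v] is approximated by regular subgradients of [G] at points [z] near [yb]
   with [G z] near [G yb]: the sequential definition of the limiting
   subdifferential, stated with a tolerance instead of sequences. *)
Definition approx_by_regular_subgrads (G : R -> R) (yb v : R) : Prop :=
  forall eta, eta > 0 -> exists z w, Rabs (z - yb) < eta /\ Rabs (w - v) < eta /\
    Rabs (G z - G yb) < eta /\ regular_subgrad G z w.

(* Choosing the tolerance 1/(k+1) produces the defining sequences. *)
Lemma limiting_subdiff_of_approx G yb v :
  approx_by_regular_subgrads G yb v -> limiting_subdiff G yb v.
Proof.
  intros Happ.
  assert (Hk : forall k : nat, exists q : R * R, Rabs (fst q - yb) < / (INR k + 1) /\
    Rabs (snd q - v) < / (INR k + 1) /\ Rabs (G (fst q) - G yb) < / (INR k + 1) /\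
    regular_subgrad G (fst q) (snd q)).
  { intros k; destruct (Happ (/ (INR k + 1))) as [z [w Hzw]].
    - apply Rinv_0_lt_compat; pose proof (pos_INR k); lra.
    - exists (z, w); exact Hzw. }
  destruct (choice _ Hk) as [q Hq].
  exists (fun k => fst (q k)), (fun k => snd (q k)).
  repeat split; try apply Un_cv_of_inv_bound; intros k; apply (Hq k).
Qed.

Lemma limiting_subdiff_bound G yb L v :
  (forall eta, eta > 0 -> locally_lipschitz_with G yb (L + eta)) ->
  limiting_subdiff G yb v -> Rabs v <= L.
Proof.
  intros Hlip [ys [vs [Hy [Hv [_ Hsub]]]]]; apply Rle_of_approx; intros e He.
  destruct (Hlip (e / 2) ltac:(lra)) as [d [Hd HL]].
  destruct (Hy (d / 2) ltac:(lra)) as [N1 HN1].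
  destruct (Hv (e / 2) ltac:(lra)) as [N2 HN2].
  set (k := max N1 N2).
  specialize (HN1 k (Nat.le_max_l _ _)); specialize (HN2 k (Nat.le_max_r _ _)).
  unfold R_dist in *; apply Rabs_def2 in HN1; apply Rabs_def2 in HN2.
  assert (Hvk : Rabs (vs k) <= L + e / 2).
  { apply (regular_subgrad_bound G (ys k) (vs k) (d / 2)); [apply Hsub | lra |].
    intros y Hyk; apply Rabs_def2 in Hyk; apply HL; apply Rabs_def1; lra. }
  apply Rabs_le_bounds in Hvk; apply Rabs_le; lra.
Qed.

Lemma nondecreasing_quotient G y y' : y < y' -> G y <= G y' ->
  Rabs (G y - G y') / Rabs (y - y') = (G y' - G y) / (y' - y).
Proof.
  intros Hy HG; rewrite (Rabs_minus_sym (G y)), (Rabs_minus_sym y).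
  rewrite !Rabs_pos_eq by lra; reflexivity.
Qed.

Lemma steep_chord G yb L rho : lip G yb = Finite L ->
  (forall a b, Rabs (a - yb) < rho -> Rabs (b - yb) < rho -> a <= b -> G a <= G b) ->
  forall eta delta, eta > 0 -> 0 < delta <= rho ->
  exists a b, a < b /\ Rabs (a - yb) < delta /\ Rabs (b - yb) < delta /\
    (G b - G a) / (b - a) > L - eta.
Proof.
  intros HL Hmono eta d Heta Hd.
  destruct (lip_lower G yb L HL eta d Heta ltac:(lra)) as [y [y' [Hne [Hy [Hy' Hq]]]]].
  destruct (Rlt_or_le y y') as [Hlt|Hle].
  - exists y, y'; rewrite nondecreasing_quotient in Hq; auto; apply Hmono; lra.
  - assert (Hlt : y' < y) by (destruct Hle; [auto | congruence]).
    rewrite Rabs_minus_sym, (Rabs_minus_sym y) in Hq.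
    exists y', y; rewrite nondecreasing_quotient in Hq; auto; apply Hmono; lra.
Qed.

(* If [G] is nondecreasing near [yb] and [lip G yb = L], then [L] is a limit of
   regular subgradients: pick a steep difference quotient close to [yb] and
   apply the fuzzy mean value inequality to it; the subgradient it yields lies
   in [L - 2e, L + e] and its base point is close to [yb]. *)
Lemma lip_approx_by_regular_subgrads G yb L rho : lip G yb = Finite L -> rho > 0 ->
  (forall a b, Rabs (a - yb) < rho -> Rabs (b - yb) < rho -> a <= b -> G a <= G b) ->
  approx_by_regular_subgrads G yb L.
Proof.
  intros HL Hrho Hmono eta Heta.
  assert (HL0 : 0 <= L) by (pose proof (lip_nonneg G yb) as H; rewrite HL in H; exact H).
  set (e := Rmin 1 (eta / 3)).
  assert (He : 0 < e /\ e <= 1 /\ e <= eta / 3).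
  { unfold e; pose proof (Rmin_l 1 (eta / 3)); pose proof (Rmin_r 1 (eta / 3));
    pose proof (Rmin_glb_lt 1 (eta / 3) 0 ltac:(lra) ltac:(lra)); lra. }
  destruct (lip_upper G yb L HL e ltac:(lra)) as [d [Hd HLip]].
  set (t := eta / (L + 2)).
  assert (Ht : 0 < t /\ t * (L + 2) = eta)
    by (unfold t; split; [apply Rdiv_lt_0_compat | field]; lra).
  set (d1 := Rmin (Rmin d rho) t / 4).
  assert (Hd1 : 0 < d1 /\ d1 <= d / 4 /\ d1 <= rho / 4 /\ d1 <= t / 4).
  { unfold d1; pose proof (Rmin_l (Rmin d rho) t); pose proof (Rmin_r (Rmin d rho) t);
    pose proof (Rmin_l d rho); pose proof (Rmin_r d rho);
    pose proof (Rmin_glb_lt (Rmin d rho) t 0 (Rmin_glb_lt d rho 0 Hd Hrho) (proj1 Ht)); lra. }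
  destruct (steep_chord G yb L rho HL Hmono e d1 ltac:(lra) ltac:(lra))
    as [a [b [Hab [Ha [Hb Hslope]]]]].
  apply Rabs_def2 in Ha; apply Rabs_def2 in Hb.
  destruct (fuzzy_mean_value G (yb - d) (yb + d) a b d1 (L + e) e) as [z [v [Hz [Hsub Hv]]]];
    try lra.
  { intros u u' Hu Hu'; apply HLip; apply Rabs_def1; lra. }
  assert (Hzyb : Rabs (z - yb) < t / 2) by (apply Rabs_def1; lra).
  assert (Ht2 : t / 2 < eta) by nra.
  assert (Hvbound : Rabs v <= L + e).
  { apply (regular_subgrad_bound G z v (d / 2)); [exact Hsub | lra |].
    intros u Hu; apply Rabs_def2 in Hu; apply HLip; apply Rabs_def1; lra. }
  assert (HGz : Rabs (G z - G yb) <= (L + e) * Rabs (z - yb)).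
  { apply HLip; [apply Rabs_def1; lra | rewrite Rminus_diag, Rabs_R0; lra]. }
  exists z, v; split; [lra | split; [|split; [|exact Hsub]]].
  - apply Rabs_le_bounds in Hvbound; apply Rabs_def1; lra.
  - assert ((L + e) * Rabs (z - yb) <= (L + 1) * (t / 2))
      by (apply Rmult_le_compat; pose proof (Rabs_pos (z - yb)); lra).
    nra.
Qed.

Lemma lip_eq_sup_limiting_subdiff G yb L rho : lip G yb = Finite L -> rho > 0 ->
  (forall a b, Rabs (a - yb) < rho -> Rabs (b - yb) < rho -> a <= b -> G a <= G b) ->
  lip G yb = Rbar_sup (fun w => exists v, limiting_subdiff G yb v /\ w = Finite (Rabs v)).
Proof.
  intros HL Hrho Hmono; symmetry; apply Rbar_sup_unique; rewrite HL; split.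
  - intros w [v [Hv ->]]; simpl.
    exact (limiting_subdiff_bound G yb L v (lip_upper G yb L HL) Hv).
  - intros w Hw; apply Hw; exists L; split.
    + apply limiting_subdiff_of_approx, (lip_approx_by_regular_subgrads G yb L rho); auto.
    + f_equal; symmetry; apply Rabs_pos_eq.
      pose proof (lip_nonneg G yb) as H; rewrite HL in H; exact H.
Qed.

Theorem corollary3p4 (n : nat) (f : Rn n -> R) (x : Rn n) (eps : R)
  (hf : bdd_above_on_bdd f) (heps : eps > 0)
  (hlip : Rbar_lt (lip (gx f x) eps) p_infty) :
  Rbar_le (calm (fbar f eps) x) (lip (gx f x) eps) /\
  lip (gx f x) eps =
    Rbar_sup (fun w => exists v, limiting_subdiff (gx f x) eps v /\
                                 w = Finite (Rabs v)).
Proof.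
  destruct (lip_finite _ _ hlip) as [L HL].
  split.
  - rewrite HL; apply calm_fbar_le; auto; exact (lip_upper _ _ _ HL).
  - apply (lip_eq_sup_limiting_subdiff _ _ L eps HL heps).
    intros a b Ha _ Hab; apply Rabs_def2 in Ha; apply gx_mono; auto; lra.
Qed.
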